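(* Let $M_i=(Q_i,R_i,X_i,\delta_i)$, $i=1,2,3,4$, be rough finite state machines. Then $(M_1\circ M_2)\times(M_3\circ M_4)\preceq(M_1\times M_3)\circ(M_2\times M_4)$.
   Context: For a finite set $Q$ with an equivalence relation $R$ and $A\subseteq Q$, $\underline{A}$ is the union of the $R$-classes contained in $A$ and $\overline{A}$ is the union of the $R$-classes meeting $A$. A rough finite state machine (RFSM) is $M=(Q,R,X,\delta)$ with $Q$ a nonempty finite state set, $R$ an equivalence relation on $Q$, $X$ a nonempty finite input set, and $\delta$ assigning to each $(q,a)\in Q\times X$ a pair $\delta(q,a)=(\underline{\delta(q,a)},\overline{\delta(q,a)})=(\underline{A},\overline{A})$ for some $A\subseteq Q$. For equivalence relations $R,R'$ on $Q,Q'$, $R\times R'$ is the equivalence relation on $Q\times Q'$ with $((p,p'),(q,q'))\in R\times R'$ iff $(p,q)\in R$ and $(p',q')\in R'$. Full direct product: for RFSMs $N=(Q,R,X,\delta)$, $N'=(Q',R',X',\delta')$, $N\times N'=(Q\times Q',R\times R',X\times X',\delta\times\delta')$ where $(\delta\times\delta')((q,q'),(x,x'))$ has lower part $\underline{\delta(q,x)}\times\underline{\delta'(q',x')}$ and upper part $\overline{\delta(q,x)}\times\overline{\delta'(q',x')}$. Wreath product: $N\circ N'=(Q\times Q',R\times R',X^{Q'}\times X',\delta\circ\delta')$, where $X^{Q'}$ is the set of all maps $Q'\to X$, and $(\delta\circ\delta')((q,q'),(f,x'))$ has lower part $\underline{\delta(q,f(q'))}\times\underline{\delta'(q',x')}$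 and upper part $\overline{\delta(q,f(q'))}\times\overline{\delta'(q',x')}$. These constructions are applied iteratively (e.g. $(M_1\circ M_2)\times(M_3\circ M_4)$ has state set $(Q_1\times Q_2)\times(Q_3\times Q_4)$, relation $(R_1\times R_2)\times(R_3\times R_4)$ and input set $(X_1^{Q_2}\times X_2)\times(X_3^{Q_4}\times X_4)$; $(M_1\times M_3)\circ(M_2\times M_4)$ has state set $(Q_1\times Q_3)\times(Q_2\times Q_4)$ and input set $(X_1\times X_3)^{Q_2\times Q_4}\times(X_2\times X_4)$). Covering: for RFSMs $N_1=(P_1,S_1,Y_1,\mu_1)$ and $N_2=(P_2,S_2,Y_2,\mu_2)$, a covering of $N_1$ by $N_2$ is a pair $(\eta,\xi)$ with $\eta:P_2\to P_1$ surjective and $\xi:Y_1\to Y_2$ a map (extended to words by $\xi(e)=e$, $\xi(y_1\cdots y_n)=\xi(y_1)\cdots\xi(y_n)$) such that (i) $(p,q)\in S_2\Rightarrow(\eta(p),\eta(q))\in S_1$ for all $p,q\in P_2$, and (ii) for all $p\in P_2$, $y\in Y_1$: $\underline{\mu_1(\eta(p),y)}\subseteq\eta(\underline{\mu_2(p,\xi(y))})$ and $\overline{\mu_1(\eta(p),y)}\subseteq\eta(\overline{\mu_2(p,\xi(y))})$. $N_1\preceq N_2$ means such a covering exists. *)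

From mathcomp Require Import all_boot.
Set Implicit Arguments. Unset Strict Implicit. Unset Printing Implicit Defensive.

(* Raw data of a rough finite state machine M = (Q, R, X, delta).
   delta q a is the pair (lower part, upper part). *)
Record rfsm_data := RFSMData {
  st : finType;
  rl : rel st;
  inp : finType;
  tr : st -> inp -> {set st} * {set st}
}.

Definition rclass (Q : finType) (R : rel Q) (p : Q) : {set Q} := [set r | R p r].

Definition lower_approx (Q : finType) (R : rel Q) (A : {set Q}) : {set Q} :=
  \bigcup_(p | rclass R p \subset A) rclass R p.

Definition upper_approx (Q : finType) (R : rel Q) (A : {set Q}) : {set Q} :=
  \bigcup_(p | rclass R p :&: A != set0) rclass R p.

Definition is_rfsm (M : rfsm_data) : Prop :=
  [/\ 0 < #|st M|, 0 < #|inp M|, equivalence_rel (@rl M) &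
      forall (q : st M) (a : inp M), exists A : {set st M},
        tr q a = (lower_approx (@rl M) A, upper_approx (@rl M) A)].

Definition prod_rel (Q Q' : finType) (R : rel Q) (R' : rel Q') : rel (Q * Q') :=
  fun u v => R u.1 v.1 && R' u.2 v.2.

Definition rfsm_prod (N N' : rfsm_data) : rfsm_data :=
  @RFSMData (st N * st N')%type (prod_rel (@rl N) (@rl N'))
    (inp N * inp N')%type
    (fun u x => (setX (tr u.1 x.1).1 (tr u.2 x.2).1,
                 setX (tr u.1 x.1).2 (tr u.2 x.2).2)).

Definition rfsm_wreath (N N' : rfsm_data) : rfsm_data :=
  @RFSMData (st N * st N')%type (prod_rel (@rl N) (@rl N'))
    ({ffun st N' -> inp N} * inp N')%type
    (fun u x => (setX (tr u.1 (x.1 u.2)).1 (tr u.2 x.2).1,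
                 setX (tr u.1 (x.1 u.2)).2 (tr u.2 x.2).2)).

Definition covers (N1 N2 : rfsm_data) : Prop :=
  exists (eta : st N2 -> st N1) (xi : inp N1 -> inp N2),
    [/\ (forall p1 : st N1, exists p2 : st N2, eta p2 = p1),
        (forall p q : st N2, rl p q -> rl (eta p) (eta q)) &
        (forall (p : st N2) (y : inp N1),
            (tr (eta p) y).1 \subset eta @: (tr p (xi y)).1 /\
            (tr (eta p) y).2 \subset eta @: (tr p (xi y)).2)].

(* Both machines have, up to the shuffle ((q1,q2),(q3,q4)) <-> ((q1,q3),(q2,q4)),
   the same states and relation, and an input ((f,x2),(g,x4)) of the left
   machine is simulated by the input (q |-> (f q.1, g q.2), (x2,x4)) of the
   right one, whose transitions are then exactly the shuffled transitions.
   The covering is a pure rearrangement of coordinates, so the RFSM axioms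
   are never used. *)
From mathcomp Require Import all_boot.

Lemma covers_of_tr_imset (N1 N2 : rfsm_data) (eta : st N2 -> st N1)
    (eta' : st N1 -> st N2) (xi : inp N1 -> inp N2) :
  cancel eta' eta ->
  (forall p q, rl p q -> rl (eta p) (eta q)) ->
  (forall p y, tr (eta p) y = (eta @: (tr p (xi y)).1, eta @: (tr p (xi y)).2)) ->
  covers N1 N2.
Proof.
move=> eta'K eta_rel eta_tr; exists eta, xi; split=> //.
- by move=> p1; exists (eta' p1).
- by move=> p y; rewrite eta_tr.
Qed.

Definition swap_mid {A B C D : Type} (u : (A * B) * (C * D)) : (A * C) * (B * D) :=
  ((u.1.1, u.2.1), (u.1.2, u.2.2)).

Lemma swap_midK (A B C D : Type) :
  cancel (@swap_mid A B C D) (@swap_mid A C B D).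
Proof. by case=> -[? ?] []. Qed.

Lemma imset_swap_mid_setX (A B C D : finType) (SA : {set A}) (SB : {set B})
    (SC : {set C}) (SD : {set D}) :
  swap_mid @: setX (setX SA SB) (setX SC SD) = setX (setX SA SC) (setX SB SD).
Proof.
apply/setP=> -[[a c] [b d]]; rewrite !in_setX /=.
apply/imsetP/idP=> [[[[a' b'] [c' d']] + [-> -> -> ->]] | ].
- by rewrite !in_setX => /andP[/andP[-> ->] /andP[-> ->]].
- move=> /andP[/andP[Ha Hc] /andP[Hb Hd]].
  by exists ((a, b), (c, d)); rewrite // !in_setX Ha Hb Hc Hd.
Qed.

Lemma prod_rel_swap_mid (A B C D : finType) (RA : rel A) (RB : rel B)
    (RC : rel C) (RD : rel D) (u v : (A * C) * (B * D)) :
  prod_rel (prod_rel RA RB) (prod_rel RC RD) (swap_mid u) (swap_mid v) =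
  prod_rel (prod_rel RA RC) (prod_rel RB RD) u v.
Proof. by rewrite /prod_rel /= andbACA. Qed.

Definition wreath_prod_input {M1 M2 M3 M4 : rfsm_data}
    (y : inp (rfsm_prod (rfsm_wreath M1 M2) (rfsm_wreath M3 M4))) :
  inp (rfsm_wreath (rfsm_prod M1 M3) (rfsm_prod M2 M4)) :=
  ([ffun q => (y.1.1 q.1, y.2.1 q.2)], (y.1.2, y.2.2)).

Lemma tr_wreath_prod_swap_mid (M1 M2 M3 M4 : rfsm_data)
    (p : st (rfsm_wreath (rfsm_prod M1 M3) (rfsm_prod M2 M4)))
    (y : inp (rfsm_prod (rfsm_wreath M1 M2) (rfsm_wreath M3 M4))) :
  let t := tr p (wreath_prod_input y) in
  tr (swap_mid p : st (rfsm_prod (rfsm_wreath M1 M2) (rfsm_wreath M3 M4))) y =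
  (swap_mid @: t.1, swap_mid @: t.2).
Proof. by rewrite /= ffunE !imset_swap_mid_setX. Qed.

Theorem proposition3p2 (M1 M2 M3 M4 : rfsm_data) :
  is_rfsm M1 -> is_rfsm M2 -> is_rfsm M3 -> is_rfsm M4 ->
  covers (rfsm_prod (rfsm_wreath M1 M2) (rfsm_wreath M3 M4))
         (rfsm_wreath (rfsm_prod M1 M3) (rfsm_prod M2 M4)).
Proof.
move=> _ _ _ _.
apply: (@covers_of_tr_imset _ _ _ _ wreath_prod_input).
- exact: swap_midK.
- by move=> p q; rewrite /= prod_rel_swap_mid.
- exact: tr_wreath_prod_swap_mid.
Qed.
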